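(* Let $G$ be a connected graph and let $H$ be a connected component of the complement $\overline{G}$ such that $H$ is isomorphic to the complete graph $K_n$ for some $n\geq 2$. Then no vertex of $H$ is a basis forced vertex of $G$.
   Context: All graphs are finite and simple. $\overline{G}$ denotes the complement graph. For vertices $u,v$ of a connected graph $G$, $d(u,v)$ is the length of a shortest $u$–$v$ path. A set $R\subseteq V(G)$ is a resolving set if for all distinct $x,y\in V(G)$ there is $r\in R$ with $d(r,x)\neq d(r,y)$. The metric dimension $\dim(G)$ is the minimum cardinality of a resolving set, and a resolving set of cardinality $\dim(G)$ is a metric basis. A vertex is a basis forced vertex if it belongs to every metric basis of $G$. *)

From mathcomp Require Import all_boot.
Set Implicit Arguments. Unset Strict Implicit. Unset Printing Implicit Defensive.

Definition simple_graph (T : finType) (e : rel T) : Prop :=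
  symmetric e /\ irreflexive e.

Definition connected_graph (T : finType) (e : rel T) : Prop :=
  forall u v : T, connect e u v.

Definition compl_rel (T : finType) (e : rel T) : rel T :=
  fun x y => (x != y) && ~~ e x y.

Fixpoint walk (T : finType) (e : rel T) (k : nat) (u v : T) : bool :=
  match k with
  | 0 => u == v
  | k'.+1 => [exists w, e u w && walk e k' w v]
  end.

(* shortest path distance: least k with a walk of length k (any shortest
   path has fewer than #|T| edges; value #|T| if unreachable, which does not
   occur in connected graphs) *)
Definition dist (T : finType) (e : rel T) (u v : T) : nat :=
  find (fun k => walk e k u v) (iota 0 #|T|).

Definition resolving (T : finType) (e : rel T) (R : {set T}) : Prop :=
  forall x y : T, x != y -> exists2 r, r \in R & dist e r x != dist e r y.

Definition metric_basis (T : finType) (e : rel T) (R : {set T}) : Prop :=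
  resolving e R /\ forall R' : {set T}, resolving e R' -> #|R| <= #|R'|.

Definition basis_forced (T : finType) (e : rel T) (v : T) : Prop :=
  forall R : {set T}, metric_basis e R -> v \in R.

Definition is_component (T : finType) (f : rel T) (H : {set T}) : Prop :=
  exists x : T, H = [set y | connect f x y].

Definition induced_iso_Kn (T : finType) (f : rel T) (H : {set T}) (n : nat) : Prop :=
  exists g : 'I_n -> T,
    injective g /\ (forall y, y \in H -> exists i, g i = y) /\
    (forall i, g i \in H) /\ (forall i j, f (g i) (g j) = (i != j)).

From mathcomp Require Import all_boot fingroup perm.

Set Implicit Arguments.
Unset Strict Implicit.
Unset Printing Implicit Defensive.

(* The vertices of a component H of the complement that induces a clique there
   are pairwise non-adjacent in G and adjacent to every vertex outside H, so
   they are twins: transposing two of them is an automorphism of G.  Hence if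
   one vertex of H were forced, all of H would be, and any metric basis R would
   contain H.  But then R minus a vertex v of H is still resolving: another
   vertex u of H takes over the role of v, since u is adjacent to every vertex
   outside R but not to v.  This contradicts minimality. *)

Section Distance.
Variables (T : finType) (e : rel T).

Lemma walk1 a b : walk e 1 a b = e a b.
Proof.
apply/existsP/idP => [[w /andP[eaw /eqP <-]] // | eab].
by exists b; rewrite eab eqxx.
Qed.

Lemma dist_eq0 a b : (dist e a b == 0) = (a == b).
Proof.
rewrite /dist; have : 0 < #|T| by apply/card_gt0P; exists a.
by case: #|T| => // n _ /=; case: (a == b).
Qed.

Lemma dist_self a : dist e a a = 0.
Proof. by apply/eqP; rewrite dist_eq0. Qed.

Lemma dist1 a b : a != b -> (dist e a b == 1) = e a b.
Proof.
move=> ab; rewrite /dist.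
have : 1 < #|T| by apply: leq_trans (max_card (mem [set a; b])); rewrite cards2 ab.
case: #|T| => [|[|n]] // _.
rewrite [iota _ _]/= /= -/(walk e 0 a b) /= (negbTE ab) -/(walk e 1 a b) walk1.
by case: (e a b).
Qed.

Lemma dist_self_neq x y : x != y -> dist e x x != dist e x y.
Proof. by move=> xy; rewrite dist_self eq_sym dist_eq0. Qed.

End Distance.

Section Automorphism.
Variables (T : finType) (e : rel T) (s : {perm T}).
Hypothesis s_aut : {mono s : a b / e a b}.

Lemma walk_aut k a b : walk e k (s a) (s b) = walk e k a b.
Proof.
elim: k a => [|k IHk] a /=; first by rewrite (inj_eq perm_inj).
apply/existsP/existsP => [[w /andP[eaw wb]] | [w /andP[eaw wb]]].
  by exists (s^-1 w)%g; rewrite -s_aut -IHk permKV eaw.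
by exists (s w); rewrite s_aut IHk eaw.
Qed.

Lemma dist_aut a b : dist e (s a) (s b) = dist e a b.
Proof. by apply: eq_find => k; apply: walk_aut. Qed.

Lemma resolving_aut R : resolving e R -> resolving e (s @: R).
Proof.
move=> Rres x y xy.
have [|r rR dr] := Rres (s^-1 x)%g (s^-1 y)%g; first by rewrite (inj_eq perm_inj).
by exists (s r); rewrite ?imset_f // -{1}(permKV s x) -{1}(permKV s y) !dist_aut.
Qed.

Lemma metric_basis_aut R : metric_basis e R -> metric_basis e (s @: R).
Proof.
move=> [Rres Rmin]; split; first exact: resolving_aut.
by move=> R' /Rmin; rewrite card_imset //; apply: perm_inj.
Qed.

End Automorphism.

Section Twins.
Variables (T : finType) (e : rel T) (u v : T).
Hypotheses (e_sym : symmetric e) (uv_twins : forall z, e u z = e v z).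

Lemma tperm_twins_aut : {mono tperm u v : a b / e a b}.
Proof.
have swap_l a c : e (tperm u v a) c = e a c.
  by case: tpermP => [->|->|]; rewrite ?uv_twins.
by move=> a b; rewrite swap_l e_sym swap_l e_sym.
Qed.

Lemma dist_twins z : u != z -> v != z -> dist e u z = dist e v z.
Proof.
move=> uz vz; rewrite -{1}(tpermR u v) -{1}(tpermD uz vz).
exact: dist_aut tperm_twins_aut _ _.
Qed.

Lemma basis_forced_twin : basis_forced e v -> basis_forced e u.
Proof.
move=> vforced R /(metric_basis_aut tperm_twins_aut) /vforced /imsetP[r rR vr].
by rewrite (_ : u = r) // -(tpermK u v r) -vr tpermR.
Qed.

End Twins.

Section MetricBasis.
Variables (T : finType) (e : rel T).

Definition resolvingb (R : {set T}) :=
  [forall x, forall y, (x != y) ==> [exists r in R, dist e r x != dist e r y]].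

Lemma resolvingP R : reflect (resolving e R) (resolvingb R).
Proof.
apply: (iffP forallP) => [Rres x y xy | Rres x].
  by have /forallP/(_ y)/implyP/(_ xy)/exists_inP[r] := Rres x; exists r.
apply/forallP => y; apply/implyP => /Rres[r rR dr].
by apply/exists_inP; exists r.
Qed.

Lemma exists_metric_basis : exists R, metric_basis e R.
Proof.
have Tres : resolvingb setT.
  by apply/resolvingP => x y xy; exists x; rewrite ?inE ?dist_self_neq.
have [R /resolvingP Rres Rmin] := arg_minnP (fun R : {set T} => #|R|) Tres.
by exists R; split=> // R' /resolvingP; apply: Rmin.
Qed.

Lemma metric_basis_setD1_not_resolving R v :
  metric_basis e R -> v \in R -> ~ resolving e (R :\ v).
Proof. by move=> [_ Rmin] vR /Rmin; rewrite (cardsD1 v R) vR add1n ltnn. Qed.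

End MetricBasis.

Section JoinedIndependentSet.
Variables (T : finType) (e : rel T) (H : {set T}).
Hypotheses (e_sym : symmetric e) (H_indep : {in H &, forall a b, ~~ e a b})
  (H_join : forall a b, a \in H -> b \notin H -> e a b).

Lemma join_twins a b : a \in H -> b \in H -> forall z, e a z = e b z.
Proof.
move=> aH bH z; have [zH | zH] := boolP (z \in H); last by rewrite !H_join.
by rewrite (negbTE (H_indep aH zH)) (negbTE (H_indep bH zH)).
Qed.

Lemma resolving_setD1 u v (R : {set T}) : u \in H -> v \in H -> u != v ->
  H \subset R -> resolving e R -> resolving e (R :\ v).
Proof.
move=> uH vH uv HR Rres x y xy.
have [xR | xR] := boolP (x \in R :\ v); first by exists x; rewrite ?dist_self_neq.
have [yR | yR] := boolP (y \in R :\ v).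
  by exists y; rewrite // eq_sym dist_self_neq // eq_sym.
have uR : u \in R :\ v by rewrite !inE uv (subsetP HR).
have neq_u z : z \notin R :\ v -> u != z by move=> zR; apply: contraNneq zR => <-.
have dist_u_out z : z \notin R :\ v -> z != v -> dist e u z = 1.
  move=> zR zv; apply/eqP; rewrite dist1 ?neq_u // H_join //.
  by apply: contra zR => zH; rewrite !inE zv (subsetP HR).
have dist_uv : dist e u v != 1 by rewrite dist1 ?H_indep.
have [xv | xv] := eqVneq x v.
  by exists u; rewrite // xv (dist_u_out y) // eq_sym -xv.
have [yv | yv] := eqVneq y v.
  by exists u; rewrite // yv (dist_u_out x) // eq_sym.
have [r rR dr] := Rres x y xy; have [rv | rv] := eqVneq r v; last first.
  by exists r; rewrite // !inE rv.
have twins := join_twins uH vH.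
have [vx vy] : v != x /\ v != y by rewrite !(eq_sym v).
by exists u; rewrite // !(dist_twins e_sym twins) ?neq_u // -rv.
Qed.

End JoinedIndependentSet.

Section ComplementComponent.
Variables (T : finType) (e : rel T) (H : {set T}).

Lemma compl_component_join :
  is_component (compl_rel e) H -> forall a b, a \in H -> b \notin H -> e a b.
Proof.
move=> [x ->] a b aH bH; have ab : a != b by apply: contraNneq bH => <-.
move: aH bH; rewrite !inE => xa; apply: contraNT => eab.
by apply: connect_trans xa (connect1 _); rewrite /compl_rel ab eab.
Qed.

Lemma induced_iso_Kn_card (f : rel T) n : induced_iso_Kn f H n -> #|H| = n.
Proof.
move=> [g [ginj [gsurj [gH _]]]].
have -> : H = [set g i | i in 'I_n].
  apply/setP => y; apply/idP/imsetP => [/gsurj[i <-] | [i _ ->] //].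
  by exists i.
by rewrite card_imset // card_ord.
Qed.

Lemma induced_iso_Kn_compl_indep n : irreflexive e ->
  induced_iso_Kn (compl_rel e) H n -> {in H &, forall a b, ~~ e a b}.
Proof.
move=> e_irr [g [_ [gsurj [_ gK]]]] a b /gsurj[i <-] /gsurj[j <-].
have [-> | ij] := eqVneq i j; first by rewrite e_irr.
by move: (gK i j); rewrite ij => /andP[].
Qed.

End ComplementComponent.

Theorem lemma5 (T : finType) (e : rel T) (H : {set T}) (n : nat) :
  simple_graph e -> connected_graph e ->
  is_component (compl_rel e) H -> 2 <= n -> induced_iso_Kn (compl_rel e) H n ->
  forall v, v \in H -> ~ basis_forced e v.
Proof.
move=> [e_sym e_irr] _ Hcomp n2 HKn v vH vforced.
have H_join := compl_component_join Hcomp.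
have H_indep := induced_iso_Kn_compl_indep e_irr HKn.
have /set0Pn[u] : H :\ v != set0.
  move: n2; rewrite -(induced_iso_Kn_card HKn) (cardsD1 v H) vH add1n ltnS.
  by rewrite card_gt0.
rewrite !inE => /andP[uv uH].
have [R Rbasis] := exists_metric_basis e.
have HR : H \subset R.
  apply/subsetP => w wH.
  exact: basis_forced_twin e_sym (join_twins H_indep H_join wH vH) vforced R Rbasis.
apply: (metric_basis_setD1_not_resolving Rbasis (vforced R Rbasis)).
exact: (resolving_setD1 e_sym H_indep H_join uH vH uv HR Rbasis.1).
Qed.
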